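(* Let $\mathbf C$ be a category of coframes and $L$ a $\mathbf C$-object. (1) If $L$ is spatial, then $\nu=\operatorname{adh}_{\lim_\nu}$ for every adherence structure $\nu$ on $L$. (2) If $L$ is prime-continuous, then $\lim=\lim_{\operatorname{adh}_{\lim}}$ for every classical pretopological convergence structure $\lim$ on $L$. (3) If $L$ is both spatial and prime-continuous, then the maps $\nu\mapsto\lim_\nu$ and $\lim\mapsto\operatorname{adh}_{\lim}$ define an order isomorphism between adherence structures and classical pretopological convergence structures on $L$ (both ordered pointwise).
   Context: A category of coframes has coframes (complete lattices where arbitrary infima distribute over binary suprema) as objects and coframe morphisms. $\mathcal C_L$ is the set of complemented elements of $L$. A filter on $L$ is a non-empty upward-closed subset closed under binary meets ($L$ allowed); $\mathbb F L$ is the set of filters. For $\mathcal A\subseteq L$, $\mathcal A^\#=\{\ell: a\wedge\ell\ne\bot\ \forall a\in\mathcal A\}$. A convergence structure on $L$ is a monotone map $\lim:\mathbb F L\to L$; it is pretopological if $\lim\bigcap_i\mathcal F_i=\bigwedge_i\lim\mathcal F_i$ for every family of filters, and classical if $\mathcal F\cap\mathcal C_L=\mathcal G\cap\mathcal C_L$ implies $\lim\mathcal F=\lim\mathcal G$. Its raw adherence is $\operatorname{adh}^0_{\lim}\ell=\bigvee\{\lim\mathcal F:\ell\in\mathcal F^\#\}$, and its adherence is $\operatorname{adh}_{\lim}\ell=\bigwedge\{\operatorname{adh}^0_{\lim}a:a\in\mathcal C_L,a\ge\ell\}$. An adherence structure on $L$ is a monotone $\nu:L\to L$ preserving finite suprema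 of complemented elements with $\nu(\ell)=\bigwedge\{\nu(a):a\in\mathcal C_L,a\ge\ell\}$; it induces $\lim_\nu\mathcal F=\bigwedge\{\nu(a):a\in\mathcal C_L\cap\mathcal F^\#\}$. $L$ is spatial if every element is a supremum of join-prime elements (an element $x\neq\bot$ with $x\le\ell_1\vee\ell_2$ implying $x\le\ell_1$ or $x\le\ell_2$). Write $\ell\lll\ell'$ if for every $S\subseteq L$ with $\ell'\le\bigvee S$ some element of $S$ is $\ge\ell$; $L$ is prime-continuous if every element $\ell$ is the supremum of the elements $\lll\ell$. *)

Set Implicit Arguments.

Record coframe := Coframe {
  carrier :> Type;
  le : carrier -> carrier -> Prop;
  le_refl : forall x, le x x;
  le_trans : forall x y z, le x y -> le y z -> le x z;
  le_antisym : forall x y, le x y -> le y x -> x = y;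
  sup : (carrier -> Prop) -> carrier;
  sup_ub : forall (S : carrier -> Prop) x, S x -> le x (sup S);
  sup_least : forall (S : carrier -> Prop) y,
      (forall x, S x -> le x y) -> le (sup S) y;
  inf : (carrier -> Prop) -> carrier;
  inf_lb : forall (S : carrier -> Prop) x, S x -> le (inf S) x;
  inf_greatest : forall (S : carrier -> Prop) y,
      (forall x, S x -> le y x) -> le y (inf S);
  inf_distr : forall (S : carrier -> Prop) (b : carrier),
      sup (fun x => x = b \/ x = inf S)
      = inf (fun y => exists s, S s /\ y = sup (fun x => x = b \/ x = s))
}.

Arguments le {c} _ _.
Arguments sup {c} _.
Arguments inf {c} _.

Section Coframe.
Context {L : coframe}.

Definition join (a b : L) : L := sup (fun x => x = a \/ x = b).
Definition meet (a b : L) : L := inf (fun x => x = a \/ x = b).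
Definition bot : L := sup (fun _ => False).
Definition top : L := inf (fun _ => False).

Definition complemented (a : L) : Prop :=
  exists b : L, meet a b = bot /\ join a b = top.

(** filters (the whole of L is allowed) *)
Definition is_filter (F : L -> Prop) : Prop :=
  (exists x, F x) /\
  (forall x y, F x -> le x y -> F y) /\
  (forall x y, F x -> F y -> F (meet x y)).

Record filter := Filter { fset :> L -> Prop; fset_filter : is_filter fset }.

Definition grill (A : L -> Prop) : L -> Prop :=
  fun l => forall a, A a -> meet a l <> bot.

Lemma bigcap_is_filter (I : Type) (Fs : I -> filter) :
  is_filter (fun x => forall i, Fs i x).
Proof.
split; [| split].
- exists top. intros i. destruct (fset_filter (Fs i)) as [[x Hx] [Hup _]].
  apply (Hup x); [exact Hx|]. apply inf_greatest. intros y [].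
- intros x y Hx Hxy i. destruct (fset_filter (Fs i)) as [_ [Hup _]].
  exact (Hup x y (Hx i) Hxy).
- intros x y Hx Hy i. destruct (fset_filter (Fs i)) as [_ [_ Hm]].
  exact (Hm x y (Hx i) (Hy i)).
Qed.

Definition bigcap_filter (I : Type) (Fs : I -> filter) : filter :=
  Filter (bigcap_is_filter Fs).

Definition convergence_structure (lim : filter -> L) : Prop :=
  forall F G : filter, (forall x, F x -> G x) -> le (lim F) (lim G).

Definition pretopological (lim : filter -> L) : Prop :=
  forall (I : Type) (Fs : I -> filter),
    lim (bigcap_filter Fs) = inf (fun y => exists i, y = lim (Fs i)).

Definition classical (lim : filter -> L) : Prop :=
  forall F G : filter,
    (forall a, complemented a -> (F a <-> G a)) -> lim F = lim G.

Definition classical_pretop_convergence (lim : filter -> L) : Prop :=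
  convergence_structure lim /\ pretopological lim /\ classical lim.

Definition raw_adh (lim : filter -> L) (l : L) : L :=
  sup (fun y => exists F : filter, grill F l /\ y = lim F).

Definition adh (lim : filter -> L) (l : L) : L :=
  inf (fun y => exists a, complemented a /\ le l a /\ y = raw_adh lim a).

Definition adherence_structure (nu : L -> L) : Prop :=
  (forall x y, le x y -> le (nu x) (nu y)) /\
  nu bot = bot /\
  (forall a b, complemented a -> complemented b ->
     nu (join a b) = join (nu a) (nu b)) /\
  (forall l, nu l = inf (fun y => exists a, complemented a /\ le l a /\ y = nu a)).

Definition lim_of (nu : L -> L) (F : filter) : L :=
  inf (fun y => exists a, complemented a /\ grill F a /\ y = nu a).

Definition join_prime (x : L) : Prop :=
  x <> bot /\ forall l1 l2, le x (join l1 l2) -> le x l1 \/ le x l2.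

Definition spatial : Prop :=
  forall l : L, l = sup (fun x => join_prime x /\ le x l).

Definition way_below (l l' : L) : Prop :=
  forall S : L -> Prop, le l' (sup S) -> exists s, S s /\ le l s.

Definition prime_continuous : Prop :=
  forall l : L, l = sup (fun x => way_below x l).

Definition le_adh (nu1 nu2 : L -> L) : Prop := forall l, le (nu1 l) (nu2 l).
Definition le_lim (lim1 lim2 : filter -> L) : Prop :=
  forall F, le (lim1 F) (lim2 F).

End Coframe.

Arguments filter L : clear implicits.
Arguments bot L : clear implicits.
Arguments top L : clear implicits.
Arguments spatial L : clear implicits.
Arguments prime_continuous L : clear implicits.

(** Both round trips reduce to complemented elements, since adherence
    structures are determined by their values there and classical limits only
    see the complemented members of a filter.

    For (1), take a complemented [a] and a join-prime [x <= nu a].  The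
    complemented [d] whose complement [d'] satisfies [~ x <= nu d'] generate a
    filter (join-primality of [x] gives closure under meets); it converges to
    at least [x] for [lim_nu] and meets [a], so [x <= adh a].  Spatiality makes
    [nu a] the join of such [x].

    For (2), let [m = lim_(adh lim) F] and [x] way below [m].  The intersection
    [V] of all filters converging to at least [x] still does so by
    pretopologicality.  If a complemented [c] in [V] were not in [F], its
    complement [c'] would meet [F], so [x] would lie below [lim G] for some [G]
    meeting [c'], contradicting [c] in [G].  Hence [V] and [V \cap F] have the
    same complemented members, and classicality gives [x <= lim V <= lim F].
    Prime-continuity makes [m] the join of such [x].

    Part (3) follows, as both maps are monotone and always land in the right
    class. *)

From Stdlib Require Import Classical.

Arguments le_refl {c} x.
Arguments le_trans {c} x y z.
Arguments le_antisym {c} x y.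
Arguments sup_ub {c} S x.
Arguments sup_least {c} S y.
Arguments inf_lb {c} S x.
Arguments inf_greatest {c} S y.
Arguments inf_distr {c} S b.

Section Lattice.
Context {L : coframe}.
Implicit Types a b d x y : L.

Lemma join_ub_l a b : le a (join a b).
Proof. apply sup_ub; auto. Qed.

Lemma join_ub_r a b : le b (join a b).
Proof. apply sup_ub; auto. Qed.

Lemma join_lub a b x : le a x -> le b x -> le (join a b) x.
Proof. intros Ha Hb. apply sup_least. intros y [-> | ->]; assumption. Qed.

Lemma meet_lb_l a b : le (meet a b) a.
Proof. apply inf_lb; auto. Qed.

Lemma meet_lb_r a b : le (meet a b) b.
Proof. apply inf_lb; auto. Qed.

Lemma meet_glb a b x : le x a -> le x b -> le x (meet a b).
Proof. intros Ha Hb. apply inf_greatest. intros y [-> | ->]; assumption. Qed.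

Lemma bot_le x : le (bot L) x.
Proof. apply sup_least. intros _ []. Qed.

Lemma le_top x : le x (top L).
Proof. apply inf_greatest. intros _ []. Qed.

Lemma le_bot_eq x : le x (bot L) -> x = bot L.
Proof. intros H. apply le_antisym; [exact H | apply bot_le]. Qed.

Lemma top_le_eq x : le (top L) x -> x = top L.
Proof. intros H. apply le_antisym; [apply le_top | exact H]. Qed.

Lemma meetC a b : meet a b = meet b a.
Proof. apply le_antisym; apply meet_glb; auto using meet_lb_l, meet_lb_r. Qed.

Lemma joinC a b : join a b = join b a.
Proof. apply le_antisym; apply join_lub; auto using join_ub_l, join_ub_r. Qed.

Lemma meet_mono a b x y : le a x -> le b y -> le (meet a b) (meet x y).
Proof.
  intros Hax Hby. apply meet_glb.
  - apply le_trans with (y := a); [apply meet_lb_l | exact Hax].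
  - apply le_trans with (y := b); [apply meet_lb_r | exact Hby].
Qed.

Lemma inf_ext (P Q : L -> Prop) : (forall y, P y <-> Q y) -> inf P = inf Q.
Proof.
  intros H. apply le_antisym; apply inf_greatest; intros x Hx; apply inf_lb, H; exact Hx.
Qed.

Lemma join_meet_distr b x y : join b (meet x y) = meet (join b x) (join b y).
Proof.
  unfold join, meet. rewrite (inf_distr (fun z => z = x \/ z = y) b).
  apply inf_ext. intros z. split.
  - intros [s [[-> | ->] ->]]; auto.
  - intros [-> | ->]; eauto.
Qed.

Lemma meet_join_le a x y : le (meet a (join x y)) (join (meet a x) (meet a y)).
Proof.
  rewrite (joinC (meet a x)), join_meet_distr. apply meet_glb.
  - apply le_trans with (y := a); [apply meet_lb_l | apply join_ub_r].
  - rewrite (joinC (meet a y)), join_meet_distr. apply meet_glb.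
    + apply le_trans with (y := a); [apply meet_lb_l | apply join_ub_r].
    + apply meet_lb_r.
Qed.

Lemma meet_join_bot {a b x y} :
  meet a x = bot L -> meet b y = bot L -> meet (meet a b) (join x y) = bot L.
Proof.
  intros Hax Hby. apply le_bot_eq.
  apply le_trans with (y := join (meet (meet a b) x) (meet (meet a b) y)).
  { apply meet_join_le. }
  apply join_lub.
  - rewrite <- Hax. apply meet_mono; [apply meet_lb_l | apply le_refl].
  - rewrite <- Hby. apply meet_mono; [apply meet_lb_r | apply le_refl].
Qed.

Definition is_complement a a' : Prop := meet a a' = bot L /\ join a a' = top L.

Lemma is_complementC a a' : is_complement a a' -> is_complement a' a.
Proof. intros [Hm Hj]. split; [rewrite meetC | rewrite joinC]; assumption. Qed.

Lemma is_complement_top_bot : is_complement (top L) (bot L).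
Proof. split; [apply le_bot_eq, meet_lb_r | apply top_le_eq, join_ub_l]. Qed.

Lemma le_complement {d d' x} : is_complement d d' -> meet d x = bot L -> le x d'.
Proof.
  intros [_ Hj] Hdx. apply le_trans with (y := join d' (meet d x)).
  - rewrite join_meet_distr. apply meet_glb.
    + rewrite joinC, Hj. apply le_top.
    + apply join_ub_r.
  - rewrite Hdx. apply join_lub; [apply le_refl | apply bot_le].
Qed.

Lemma is_complement_meet_join a a' b b' :
  is_complement a a' -> is_complement b b' ->
  is_complement (meet a b) (join a' b').
Proof.
  intros [Ham Haj] [Hbm Hbj]. split; [apply meet_join_bot; assumption |].
  apply top_le_eq. rewrite joinC, join_meet_distr. apply meet_glb.
  - rewrite <- Haj. apply join_lub; [apply join_ub_r |].
    apply le_trans with (y := join a' b'); apply join_ub_l.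
  - rewrite <- Hbj. apply join_lub; [apply join_ub_r |].
    apply le_trans with (y := join a' b'); [apply join_ub_r | apply join_ub_l].
Qed.

Lemma complemented_join a b :
  complemented a -> complemented b -> complemented (join a b).
Proof.
  intros [a' Ha] [b' Hb]. exists (meet a' b').
  apply is_complementC, is_complement_meet_join; apply is_complementC; assumption.
Qed.

Implicit Types F G : filter L.

Lemma filter_up {F x y} : F x -> le x y -> F y.
Proof. destruct (fset_filter F) as [_ [Hup _]]. apply Hup. Qed.

Lemma filter_meet {F x y} : F x -> F y -> F (meet x y).
Proof. destruct (fset_filter F) as [_ [_ Hmeet]]. apply Hmeet. Qed.

Lemma grill_le {F a b} : grill F a -> le a b -> grill F b.
Proof.
  intros Ha Hab f Hf Hfb. apply (Ha f Hf), le_bot_eq.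
  rewrite <- Hfb. apply meet_mono; [apply le_refl | exact Hab].
Qed.

Lemma not_grill_bot {F} : ~ grill F (bot L).
Proof.
  destruct (fset_filter F) as [[x Hx] _]. intros H.
  apply (H x Hx), le_bot_eq, meet_lb_r.
Qed.

Lemma grill_complement F {a a'} : is_complement a a' -> grill F a <-> ~ F a'.
Proof.
  intros Ha. split.
  - intros Hg Ha'. apply (Hg a' Ha'). rewrite meetC. apply Ha.
  - intros Hn f Hf Hfa. apply Hn, (filter_up Hf), (le_complement Ha).
    rewrite meetC. exact Hfa.
Qed.

Lemma grill_join {F a b} : grill F (join a b) -> grill F a \/ grill F b.
Proof.
  intros Hab. apply NNPP. intros Hn. apply not_or_and in Hn as [Ha Hb].
  apply not_all_ex_not in Ha as [f Hf]. apply imply_to_and in Hf as [HFf Hfa].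
  apply not_all_ex_not in Hb as [g Hg]. apply imply_to_and in Hg as [HFg Hgb].
  apply NNPP in Hfa. apply NNPP in Hgb.
  exact (Hab _ (filter_meet HFf HFg) (meet_join_bot Hfa Hgb)).
Qed.

Lemma grill_complemented_sub (F G : filter L) a :
  (forall c, complemented c -> G c -> F c) -> complemented a ->
  grill F a -> grill G a.
Proof.
  intros HGF [a' Ha] HFa. apply (grill_complement _ Ha).
  apply (grill_complement _ Ha) in HFa. intros HGa'. apply HFa, HGF; [| exact HGa'].
  exists a. apply is_complementC, Ha.
Qed.

End Lattice.

Section Adherence.
Context {L : coframe}.
Variable lim : filter L -> L.
Implicit Types a b l : L.

Lemma lim_le_raw_adh (F : filter L) a : grill F a -> le (lim F) (raw_adh lim a).
Proof. intros Ha. apply sup_ub. exists F. auto. Qed.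

Lemma raw_adh_le a b : le a b -> le (raw_adh lim a) (raw_adh lim b).
Proof.
  intros Hab. apply sup_least. intros y [F [HF ->]].
  apply lim_le_raw_adh, (grill_le HF Hab).
Qed.

Lemma raw_adh_join a b : raw_adh lim (join a b) = join (raw_adh lim a) (raw_adh lim b).
Proof.
  apply le_antisym.
  - apply sup_least. intros y [F [HF ->]].
    destruct (grill_join HF) as [H | H].
    + apply le_trans with (y := raw_adh lim a); [apply lim_le_raw_adh, H | apply join_ub_l].
    + apply le_trans with (y := raw_adh lim b); [apply lim_le_raw_adh, H | apply join_ub_r].
  - apply join_lub; apply raw_adh_le; [apply join_ub_l | apply join_ub_r].
Qed.

Lemma adh_le_raw_adh l a : complemented a -> le l a -> le (adh lim l) (raw_adh lim a).
Proof. intros Ha Hla. apply inf_lb. exists a. auto. Qed.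

Lemma adh_complemented a : complemented a -> adh lim a = raw_adh lim a.
Proof.
  intros Ha. apply le_antisym.
  - apply adh_le_raw_adh; [exact Ha | apply le_refl].
  - apply inf_greatest. intros y [b [_ [Hab ->]]]. apply raw_adh_le, Hab.
Qed.

Lemma adh_le l l' : le l l' -> le (adh lim l) (adh lim l').
Proof.
  intros Hll'. apply inf_greatest. intros y [a [Ha [Hl'a ->]]].
  apply adh_le_raw_adh; [exact Ha | apply (le_trans _ _ _ Hll' Hl'a)].
Qed.

Lemma adh_bot : adh lim (bot L) = bot L.
Proof.
  apply le_bot_eq, le_trans with (y := raw_adh lim (bot L)).
  - apply adh_le_raw_adh; [| apply le_refl].
    exists (top L). apply is_complementC, is_complement_top_bot.
  - apply sup_least. intros y [F [HF _]]. contradiction (not_grill_bot HF).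
Qed.

Lemma adh_adherence_structure : adherence_structure (adh lim).
Proof.
  split; [exact adh_le | split; [exact adh_bot | split]].
  - intros a b Ha Hb.
    rewrite !adh_complemented by auto using complemented_join.
    apply raw_adh_join.
  - intros l. apply inf_ext. intros y.
    split; intros [a [Ha [Hla ->]]]; exists a; repeat split; auto;
      [symmetry |]; apply adh_complemented, Ha.
Qed.

End Adherence.

Lemma adh_le_lim {L : coframe} (lim1 lim2 : filter L -> L) :
  le_lim lim1 lim2 -> le_adh (adh lim1) (adh lim2).
Proof.
  intros H l. apply inf_greatest. intros y [a [Ha [Hla ->]]].
  apply le_trans with (y := raw_adh lim1 a); [apply adh_le_raw_adh; assumption |].
  apply sup_least. intros y [F [HF ->]].
  apply le_trans with (y := lim2 F); [apply H | apply lim_le_raw_adh, HF].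
Qed.

Section LimOf.
Context {L : coframe}.
Variable nu : L -> L.

Lemma lim_of_le (F : filter L) a : complemented a -> grill F a -> le (lim_of nu F) (nu a).
Proof. intros Ha HF. apply inf_lb. exists a. auto. Qed.

Lemma lim_of_monotone : convergence_structure (lim_of nu).
Proof.
  intros F G HFG. apply inf_greatest. intros y [a [Ha [HGa ->]]].
  apply lim_of_le; [exact Ha |]. intros f Hf. apply HGa, HFG, Hf.
Qed.

Lemma lim_of_pretopological : pretopological (lim_of nu).
Proof.
  intros I Fs. apply le_antisym.
  - apply inf_greatest. intros y [i ->]. apply lim_of_monotone.
    intros f Hf. exact (Hf i).
  - apply inf_greatest. intros y [a [[a' Ha'] [Hg ->]]].
    apply (grill_complement _ Ha'), not_all_ex_not in Hg as [i Hi].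
    apply le_trans with (y := lim_of nu (Fs i)); [apply inf_lb; exists i; reflexivity |].
    apply lim_of_le; [exists a'; exact Ha' |].
    apply (grill_complement _ Ha'), Hi.
Qed.

Lemma lim_of_classical : classical (lim_of nu).
Proof.
  intros F G HFG. apply inf_ext. intros y.
  split; intros [a [Ha [Hg ->]]]; exists a; (split; [exact Ha | split; [| reflexivity]]).
  - apply (grill_complemented_sub F); [intros c Hc; apply HFG, Hc | exact Ha | exact Hg].
  - apply (grill_complemented_sub G); [intros c Hc; apply HFG, Hc | exact Ha | exact Hg].
Qed.

Lemma lim_of_classical_pretop : classical_pretop_convergence (lim_of nu).
Proof.
  split; [exact lim_of_monotone |].
  split; [exact lim_of_pretopological | exact lim_of_classical].
Qed.

End LimOf.

Lemma lim_of_le_adh {L : coframe} (nu1 nu2 : L -> L) :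
  le_adh nu1 nu2 -> le_lim (lim_of nu1) (lim_of nu2).
Proof.
  intros H F. apply inf_greatest. intros y [a [Ha [HFa ->]]].
  apply le_trans with (y := nu1 a); [apply lim_of_le; assumption | apply H].
Qed.

Section Spatial.
Context {L : coframe}.
Variable nu : L -> L.
Hypothesis nu_adh : adherence_structure nu.

Definition avoiding (x l : L) : Prop :=
  exists d d', is_complement d d' /\ ~ le x (nu d') /\ le d l.

Lemma avoiding_is_filter {x} : join_prime x -> is_filter (avoiding x).
Proof.
  destruct nu_adh as [_ [nu_bot [nu_join _]]]. intros [Hx0 Hxprime].
  split; [| split].
  - exists (top L), (top L), (bot L).
    split; [apply is_complement_top_bot |]. split; [| apply le_refl].
    rewrite nu_bot. intros Hx. apply Hx0, le_bot_eq, Hx.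
  - intros l l' [d [d' [Hd [Hx Hdl]]]] Hll'.
    exists d, d'. split; [exact Hd | split; [exact Hx | exact (le_trans _ _ _ Hdl Hll')]].
  - intros l1 l2 [d1 [d1' [Hd1 [Hx1 Hdl1]]]] [d2 [d2' [Hd2 [Hx2 Hdl2]]]].
    exists (meet d1 d2), (join d1' d2').
    split; [apply is_complement_meet_join; assumption |].
    split; [| apply meet_mono; assumption].
    rewrite nu_join by (eexists; apply is_complementC; eassumption).
    intros Hx. destruct (Hxprime _ _ Hx); contradiction.
Qed.

Definition avoiding_filter {x : L} (Hx : join_prime x) : filter L :=
  Filter (avoiding_is_filter Hx).

Lemma le_lim_of_avoiding_filter (x : L) (Hx : join_prime x) :
  le x (lim_of nu (avoiding_filter Hx)).
Proof.
  apply inf_greatest. intros y [c [[c' Hc] [Hg ->]]]. apply NNPP. intros Hxc.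
  apply (Hg c').
  - exists c', c. split; [apply is_complementC, Hc | split; [exact Hxc | apply le_refl]].
  - rewrite meetC. apply Hc.
Qed.

Lemma grill_avoiding_filter (x : L) (Hx : join_prime x) (a : L) :
  le x (nu a) -> grill (avoiding_filter Hx) a.
Proof.
  destruct nu_adh as [nu_mono _].
  intros Hxa l [d [d' [Hd [Hxd' Hdl]]]] Hal. apply Hxd'.
  apply le_trans with (y := nu a); [exact Hxa |]. apply nu_mono, (le_complement Hd).
  apply le_bot_eq. rewrite <- Hal. apply meet_mono; [exact Hdl | apply le_refl].
Qed.

Lemma raw_adh_lim_of_complemented a :
  spatial L -> complemented a -> raw_adh (lim_of nu) a = nu a.
Proof.
  intros Hsp Ha. apply le_antisym.
  - apply sup_least. intros y [F [HF ->]]. apply lim_of_le; assumption.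
  - rewrite (Hsp (nu a)). apply sup_least. intros x [Hx Hxa].
    apply le_trans with (y := lim_of nu (avoiding_filter Hx)).
    + apply le_lim_of_avoiding_filter.
    + apply lim_le_raw_adh, grill_avoiding_filter, Hxa.
Qed.

Lemma adh_lim_of : spatial L -> forall l, adh (lim_of nu) l = nu l.
Proof.
  intros Hsp l. destruct nu_adh as [_ [_ [_ nu_inf]]]. rewrite nu_inf.
  apply inf_ext. intros y.
  split; intros [a [Ha [Hla ->]]]; exists a; repeat split; auto;
    [| symmetry]; apply raw_adh_lim_of_complemented; assumption.
Qed.

End Spatial.

Section PrimeContinuous.
Context {L : coframe}.
Variable lim : filter L -> L.

Lemma lim_le_lim_of_adh (F : filter L) : le (lim F) (lim_of (adh lim) F).
Proof.
  apply inf_greatest. intros y [a [Ha [HFa ->]]].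
  rewrite adh_complemented by exact Ha. apply lim_le_raw_adh, HFa.
Qed.

Lemma lim_le_of_complemented_sub (F G : filter L) :
  convergence_structure lim -> classical lim ->
  (forall c, complemented c -> G c -> F c) -> le (lim G) (lim F).
Proof.
  intros lim_mono lim_classical HGF.
  set (GF := bigcap_filter (fun b : bool => if b then G else F)).
  replace (lim G) with (lim GF).
  - apply lim_mono. intros a Ha. exact (Ha false).
  - apply lim_classical. intros a Ha. split.
    + intros H. exact (H true).
    + intros HGa [|]; [exact HGa | apply HGF; assumption].
Qed.

Definition nbhd_filter (x : L) : filter L :=
  bigcap_filter (fun G : {G : filter L | le x (lim G)} => proj1_sig G).

Lemma le_lim_nbhd_filter x : pretopological lim -> le x (lim (nbhd_filter x)).
Proof.
  intros lim_pretop. unfold nbhd_filter. rewrite lim_pretop.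
  apply inf_greatest. intros y [[G HG] ->]. exact HG.
Qed.

Lemma nbhd_filter_complemented_sub (F : filter L) x c :
  way_below x (lim_of (adh lim) F) -> complemented c -> nbhd_filter x c -> F c.
Proof.
  intros Hx [c' Hc] Hnc. apply NNPP. intros HFc.
  assert (Hc' : is_complement c' c) by (apply is_complementC, Hc).
  assert (HFc' : grill F c') by (apply (grill_complement _ Hc'), HFc).
  assert (Hm : le (lim_of (adh lim) F) (raw_adh lim c')).
  { apply le_trans with (y := adh lim c').
    - apply lim_of_le; [exists c; exact Hc' | exact HFc'].
    - apply adh_le_raw_adh; [exists c; exact Hc' | apply le_refl]. }
  destruct (Hx _ Hm) as [s [[G [HGc' ->]] HxG]].
  apply (HGc' c (Hnc (exist _ G HxG))), Hc.
Qed.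

Lemma lim_of_adh : prime_continuous L -> classical_pretop_convergence lim ->
  forall F, lim_of (adh lim) F = lim F.
Proof.
  intros Hpc [lim_mono [lim_pretop lim_classical]] F.
  apply le_antisym; [| apply lim_le_lim_of_adh].
  rewrite (Hpc (lim_of (adh lim) F)). apply sup_least. intros x Hx.
  apply le_trans with (y := lim (nbhd_filter x)); [apply le_lim_nbhd_filter, lim_pretop |].
  apply lim_le_of_complemented_sub; [exact lim_mono | exact lim_classical |].
  intros c; apply nbhd_filter_complemented_sub, Hx.
Qed.

End PrimeContinuous.

Theorem mainTheorem10 (L : coframe) :
  (* (1) *)
  (spatial L ->
     forall nu : L -> L, adherence_structure nu ->
       forall l : L, nu l = adh (lim_of nu) l) /\
  (* (2) *)
  (prime_continuous L ->
     forall lim : filter L -> L, classical_pretop_convergence lim ->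
       forall F : filter L, lim F = lim_of (adh lim) F) /\
  (* (3) *)
  (spatial L -> prime_continuous L ->
     (* the two maps are well defined *)
     (forall nu : L -> L, adherence_structure nu ->
        classical_pretop_convergence (lim_of nu)) /\
     (forall lim : filter L -> L, classical_pretop_convergence lim ->
        adherence_structure (adh lim)) /\
     (* they are mutually inverse *)
     (forall nu : L -> L, adherence_structure nu ->
        forall l : L, adh (lim_of nu) l = nu l) /\
     (forall lim : filter L -> L, classical_pretop_convergence lim ->
        forall F : filter L, lim_of (adh lim) F = lim F) /\
     (* they preserve and reflect the pointwise orders *)
     (forall nu1 nu2 : L -> L, adherence_structure nu1 -> adherence_structure nu2 ->
        (le_adh nu1 nu2 <-> le_lim (lim_of nu1) (lim_of nu2))) /\
     (forall lim1 lim2 : filter L -> L,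
        classical_pretop_convergence lim1 -> classical_pretop_convergence lim2 ->
        (le_lim lim1 lim2 <-> le_adh (adh lim1) (adh lim2)))).
Proof.
  split; [intros Hsp nu Hnu l; symmetry; apply adh_lim_of; assumption |].
  split; [intros Hpc lim Hlim F; symmetry; apply lim_of_adh; assumption |].
  intros Hsp Hpc.
  split; [intros nu _; apply lim_of_classical_pretop |].
  split; [intros lim _; apply adh_adherence_structure |].
  split; [intros nu Hnu; apply adh_lim_of; assumption |].
  split; [intros lim Hlim; apply lim_of_adh; assumption |].
  split.
  - intros nu1 nu2 H1 H2. split; [apply lim_of_le_adh |].
    intros H l. rewrite <- (adh_lim_of _ H1 Hsp), <- (adh_lim_of _ H2 Hsp).
    apply adh_le_lim, H.
  - intros lim1 lim2 H1 H2. split; [apply adh_le_lim |].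
    intros H F. rewrite <- (lim_of_adh _ Hpc H1), <- (lim_of_adh _ Hpc H2).
    apply lim_of_le_adh, H.
Qed.
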